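(* For any $a,b\in\mathbb{Z}[\tau]$ with $0<a<b<1$, the subgroup $F_\tau[a,b]$ is isomorphic to $F_\tau$.
   Context: Let $\tau=\frac{\sqrt5-1}{2}$ (a root of $X^2+X-1$, a unit of the ring $\mathbb{Z}[\tau]$). $F_\tau$ denotes the group of piecewise linear homeomorphisms of $[0,1]$ with finitely many breakpoints, all breakpoints in $\mathbb{Z}[\tau]$, and all slopes integer powers of $\tau$ (i.e. $G([0,1];\mathbb{Z}[\tau],\langle\tau\rangle)$ in Bieri–Strebel notation). For $a,b\in\mathbb{Z}[\tau]$ with $0<a<b<1$, $F_\tau[a,b]$ denotes the subgroup of $F_\tau$ consisting of those elements whose support is included in $[a,b]$. *)

From Stdlib Require Import Reals ZArith.
Open Scope R_scope.

(* tau = (sqrt 5 - 1)/2, a root of X^2 + X - 1 *)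
Definition tau : R := (sqrt 5 - 1) / 2.

Definition inZtau (x : R) : Prop :=
  exists m n : Z, x = IZR m + IZR n * tau.

(* f : R -> R represents an element of F_tau: it is the identity outside
   [0,1], fixes 0 and 1, and there is a subdivision
   0 = p 0 < p 1 < ... < p k = 1 with all p i in Z[tau] such that on each
   [p i, p (i+1)] the map f is affine with slope tau^(e i), e i : Z.
   (Subdivision points which are not genuine breakpoints are allowed; this
   is the same group.)  Such f restricted to [0,1] is a continuous
   increasing bijection of [0,1], i.e. a PL homeomorphism. *)
Definition isFtau (f : R -> R) : Prop :=
  (forall x, (x < 0 \/ 1 < x) -> f x = x) /\
  f 0 = 0 /\ f 1 = 1 /\
  exists (k : nat) (p : nat -> R) (e : nat -> Z),
    p 0%nat = 0 /\ p k = 1 /\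
    (forall i, (i < k)%nat -> p i < p (S i)) /\
    (forall i, (i <= k)%nat -> inZtau (p i)) /\
    (forall i x, (i < k)%nat -> p i <= x <= p (S i) ->
        f x = f (p i) + powerRZ tau (e i) * (x - p i)).

(* F_tau[a,b]: elements of F_tau whose support lies in [a,b]
   (the support is the closure of {x | f x <> x}; since [a,b] is closed,
   this is equivalent to {x | f x <> x} being included in [a,b]). *)
Definition isFtau_ab (a b : R) (f : R -> R) : Prop :=
  isFtau f /\ (forall x, f x <> x -> a <= x <= b).

Definition comp_group_iso (G H : (R -> R) -> Prop) (phi : (R -> R) -> (R -> R)) : Prop :=
  (forall f, G f -> H (phi f)) /\
  (forall f g, G f -> G g -> phi f = phi g -> f = g) /\
  (forall h, H h -> exists f, G f /\ phi f = h) /\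
  (forall f g, G f -> G g -> phi (fun x => f (g x)) = (fun x => phi f (phi g x))).

(* Conjugating by a bijection of R that maps [0,1] onto [a,b] and is a translation
   outside identifies F_tau with F_tau[a,b], provided that on [0,1] it is piecewise
   linear with breakpoints in Z[tau] and slopes powers of tau.  Such a map exists
   whenever b - a is a positive element of Z[tau]: the lengths onto which [0,1] can be
   mapped this way contain every power of tau and are closed under addition (cut
   [0,1] at tau, using 1 = tau + tau^2, and rescale each piece), and a suitable power
   of the unit tau turns any positive m + n tau into one with m, n >= 0. *)

From Stdlib Require Import Reals ZArith Lra Lia Psatz.
From Stdlib Require Import FunctionalExtensionality.
Open Scope R_scope.

Lemma tau_sqr : tau * tau = 1 - tau.
Proof.
  assert (H5 : sqrt 5 * sqrt 5 = 5) by (apply sqrt_sqrt; lra).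
  unfold tau. nra.
Qed.

Lemma tau_bounds : 1 / 2 < tau < 1.
Proof.
  assert (H5 : sqrt 5 * sqrt 5 = 5) by (apply sqrt_sqrt; lra).
  pose proof (sqrt_pos 5). unfold tau. split; nra.
Qed.

Lemma tau_pos : 0 < tau.
Proof. pose proof tau_bounds. lra. Qed.

Lemma Rinv_tau : / tau = 1 + tau.
Proof.
  pose proof tau_sqr. pose proof tau_pos.
  field_simplify_eq; lra.
Qed.

Lemma powerRZ_tau_pos e : 0 < powerRZ tau e.
Proof. apply powerRZ_lt, tau_pos. Qed.

Lemma powerRZ_tau_add e1 e2 :
  powerRZ tau (e1 + e2) = powerRZ tau e1 * powerRZ tau e2.
Proof. apply powerRZ_add. pose proof tau_pos. lra. Qed.

Lemma powerRZ_tau_opp_l e : powerRZ tau (- e) * powerRZ tau e = 1.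
Proof. rewrite <- powerRZ_tau_add, Z.add_opp_diag_l. apply powerRZ_O. Qed.

Lemma inZtau_IZR m : inZtau (IZR m).
Proof. exists m, 0%Z. ring. Qed.

Lemma inZtau_tau : inZtau tau.
Proof. exists 0%Z, 1%Z. ring. Qed.

Lemma inZtau_plus x y : inZtau x -> inZtau y -> inZtau (x + y).
Proof.
  intros [m1 [n1 ->]] [m2 [n2 ->]]. exists (m1 + m2)%Z, (n1 + n2)%Z.
  rewrite !plus_IZR. ring.
Qed.

Lemma inZtau_opp x : inZtau x -> inZtau (- x).
Proof. intros [m [n ->]]. exists (- m)%Z, (- n)%Z. rewrite !opp_IZR. ring. Qed.

Lemma inZtau_minus x y : inZtau x -> inZtau y -> inZtau (x - y).
Proof. intros. apply inZtau_plus; auto using inZtau_opp. Qed.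

Lemma inZtau_mult x y : inZtau x -> inZtau y -> inZtau (x * y).
Proof.
  intros [m1 [n1 ->]] [m2 [n2 ->]].
  exists (m1 * m2 + n1 * n2)%Z, (m1 * n2 + n1 * m2 - n1 * n2)%Z.
  rewrite minus_IZR, !plus_IZR, !mult_IZR.
  transitivity (IZR m1 * IZR m2 + (IZR m1 * IZR n2 + IZR n1 * IZR m2) * tau
                + IZR n1 * IZR n2 * (tau * tau)); [ring | rewrite tau_sqr; ring].
Qed.

Lemma inZtau_powerRZ e : inZtau (powerRZ tau e).
Proof.
  assert (Hpow : forall x n, inZtau x -> inZtau (x ^ n)).
  { intros x n Hx. induction n; simpl; auto using inZtau_mult. apply (inZtau_IZR 1). }
  destruct e; simpl.
  - apply (inZtau_IZR 1).
  - apply Hpow, inZtau_tau.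
  - rewrite <- pow_inv, Rinv_tau. apply Hpow, inZtau_plus; [apply (inZtau_IZR 1)|apply inZtau_tau].
Qed.

Inductive pl_homeo (f : R -> R) : R -> R -> R -> R -> Prop :=
  | pl_affine c d c' d' e :
      c < d -> inZtau c -> inZtau d -> inZtau c' ->
      d' = c' + powerRZ tau e * (d - c) ->
      (forall x, c <= x <= d -> f x = c' + powerRZ tau e * (x - c)) ->
      pl_homeo f c d c' d'
  | pl_glue c m d c' m' d' :
      pl_homeo f c m c' m' -> pl_homeo f m d m' d' -> pl_homeo f c d c' d'.

Lemma pl_homeo_bounds f c d c' d' : pl_homeo f c d c' d' ->
  c < d /\ c' < d' /\ inZtau c /\ inZtau d /\ inZtau c' /\ inZtau d'.
Proof.
  induction 1 as [c d c' d' e Hcd Hc Hd Hc' -> _ | c m d c' m' d' _ IH1 _ IH2].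
  - pose proof (powerRZ_tau_pos e). repeat split; auto; try nra.
    apply inZtau_plus, inZtau_mult; auto using inZtau_powerRZ, inZtau_minus.
  - destruct IH1 as (? & ? & ? & ? & ? & ?), IH2 as (? & ? & ? & ? & ? & ?).
    repeat split; auto; lra.
Qed.

Lemma pl_homeo_start f c d c' d' : pl_homeo f c d c' d' -> f c = c'.
Proof.
  induction 1 as [c d c' d' e Hcd _ _ _ _ Hx | ]; auto.
  rewrite Hx by lra. ring.
Qed.

Lemma pl_homeo_end f c d c' d' : pl_homeo f c d c' d' -> f d = d'.
Proof.
  induction 1 as [c d c' d' e Hcd _ _ _ -> Hx | ]; auto.
  apply Hx. lra.
Qed.

Lemma pl_homeo_lt f c d c' d' : pl_homeo f c d c' d' ->
  forall x y, c <= x -> x < y -> y <= d -> f x < f y.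
Proof.
  induction 1 as [c d c' d' e _ _ _ _ _ Hx | c m d c' m' d' _ IH1 _ IH2];
    intros x y Hcx Hxy Hyd.
  - rewrite !Hx by lra. pose proof (powerRZ_tau_pos e). nra.
  - destruct (Rle_lt_dec y m); [apply IH1; lra|].
    destruct (Rle_lt_dec m x); [apply IH2; lra|].
    apply Rlt_trans with (f m); [apply IH1 | apply IH2]; lra.
Qed.

Lemma pl_homeo_le f c d c' d' x y : pl_homeo f c d c' d' ->
  c <= x -> x <= y -> y <= d -> f x <= f y.
Proof.
  intros Hf Hcx Hxy Hyd. destruct (Req_dec x y) as [->|Hne]; [lra|].
  left. apply (pl_homeo_lt _ _ _ _ _ Hf); lra.
Qed.

Lemma pl_homeo_maps f c d c' d' x : pl_homeo f c d c' d' ->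
  c <= x <= d -> c' <= f x <= d'.
Proof.
  intros Hf Hx. rewrite <- (pl_homeo_start _ _ _ _ _ Hf), <- (pl_homeo_end _ _ _ _ _ Hf).
  split; apply (pl_homeo_le _ _ _ _ _ _ _ Hf); lra.
Qed.

Lemma pl_homeo_ext f c d c' d' : pl_homeo f c d c' d' ->
  forall g, (forall x, c <= x <= d -> f x = g x) -> pl_homeo g c d c' d'.
Proof.
  induction 1 as [c d c' d' e Hcd Hc Hd Hc' Hd' Hx | c m d c' m' d' H1 IH1 H2 IH2];
    intros g Hg.
  - apply pl_affine with e; auto. intros x Hx'. rewrite <- Hg by auto. auto.
  - pose proof (pl_homeo_bounds _ _ _ _ _ H1). pose proof (pl_homeo_bounds _ _ _ _ _ H2).
    apply pl_glue with m m'; [apply IH1 | apply IH2]; intros; apply Hg; lra.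
Qed.

Lemma pl_homeo_id c d : c < d -> inZtau c -> inZtau d -> pl_homeo (fun x => x) c d c d.
Proof.
  intros Hcd Hc Hd. apply pl_affine with 0%Z; auto; [|intros x _]; rewrite powerRZ_O; ring.
Qed.

Lemma pl_homeo_glue_if f g c m d c' m' d' :
  pl_homeo f c m c' m' -> pl_homeo g m d m' d' ->
  pl_homeo (fun x => if Rle_dec x m then f x else g x) c d c' d'.
Proof.
  intros Hf Hg. apply pl_glue with m m'.
  - apply (pl_homeo_ext _ _ _ _ _ Hf). intros x Hx.
    destruct (Rle_dec x m); [auto | lra].
  - apply (pl_homeo_ext _ _ _ _ _ Hg). intros x Hx.
    destruct (Rle_dec x m); [|auto].
    replace x with m by lra.
    rewrite (pl_homeo_end _ _ _ _ _ Hf). apply (pl_homeo_start _ _ _ _ _ Hg).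
Qed.

Lemma pl_homeo_restrict f c d c' d' : pl_homeo f c d c' d' ->
  forall c1 d1, c <= c1 -> c1 < d1 -> d1 <= d -> inZtau c1 -> inZtau d1 ->
  pl_homeo f c1 d1 (f c1) (f d1).
Proof.
  induction 1 as [c d c' d' e _ Hc _ Hc' _ Hx | c m d c' m' d' H1 IH1 _ IH2];
    intros c1 d1 Hc1 Hcd1 Hd1 Zc1 Zd1.
  - apply pl_affine with e; auto.
    + rewrite Hx by lra.
      apply inZtau_plus, inZtau_mult; auto using inZtau_powerRZ, inZtau_minus.
    + rewrite !Hx by lra. ring.
    + intros x Hx1. rewrite !Hx by lra. ring.
  - destruct (Rle_lt_dec d1 m); [apply IH1; auto; lra|].
    destruct (Rle_lt_dec m c1); [apply IH2; auto; lra|].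
    destruct (pl_homeo_bounds _ _ _ _ _ H1) as (_ & _ & _ & Zm & _).
    apply pl_glue with m (f m); [apply IH1 | apply IH2]; auto; lra.
Qed.

Lemma pl_homeo_inverse f c d c' d' : pl_homeo f c d c' d' ->
  exists g, pl_homeo g c' d' c d /\
    (forall x, c <= x <= d -> g (f x) = x) /\
    (forall y, c' <= y <= d' -> f (g y) = y).
Proof.
  induction 1 as [c d c' d' e Hcd Hc Hd Hc' -> Hx | c m d c' m' d' H1 IH1 H2 IH2].
  - exists (fun y => c + powerRZ tau (- e) * (y - c')).
    pose proof (powerRZ_tau_opp_l e) as Hinv.
    pose proof (powerRZ_tau_pos e). pose proof (powerRZ_tau_pos (- e)).
    split; [|split].
    + apply pl_affine with (- e)%Z; auto; try nra.
      apply inZtau_plus, inZtau_mult; auto using inZtau_powerRZ, inZtau_minus.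
    + intros x Hx'. rewrite Hx by auto.
      replace (powerRZ tau (- e) * (c' + powerRZ tau e * (x - c) - c'))
        with (powerRZ tau (- e) * powerRZ tau e * (x - c)) by ring.
      rewrite Hinv. ring.
    + intros y Hy. rewrite Hx by nra.
      replace (powerRZ tau e * (c + powerRZ tau (- e) * (y - c') - c))
        with (powerRZ tau (- e) * powerRZ tau e * (y - c')) by ring.
      rewrite Hinv. ring.
  - destruct IH1 as (g1 & Hg1 & Hg1f & Hfg1), IH2 as (g2 & Hg2 & Hg2f & Hfg2).
    pose proof (pl_homeo_bounds _ _ _ _ _ H1). pose proof (pl_homeo_bounds _ _ _ _ _ H2).
    exists (fun y => if Rle_dec y m' then g1 y else g2 y).
    split; [|split].
    + exact (pl_homeo_glue_if _ _ _ _ _ _ _ _ Hg1 Hg2).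
    + intros x Hx. destruct (Rle_lt_dec x m).
      * pose proof (pl_homeo_maps _ _ _ _ _ x H1 ltac:(lra)).
        destruct (Rle_dec (f x) m'); [apply Hg1f|]; lra.
      * assert (m' < f x).
        { rewrite <- (pl_homeo_start _ _ _ _ _ H2). apply (pl_homeo_lt _ _ _ _ _ H2); lra. }
        destruct (Rle_dec (f x) m'); [|apply Hg2f]; lra.
    + intros y Hy. destruct (Rle_dec y m'); [apply Hfg1 | apply Hfg2]; lra.
Qed.

Lemma pl_homeo_comp_affine g u v u'' v'' : pl_homeo g u v u'' v'' ->
  forall f c d e, c < d -> inZtau c -> inZtau d ->
  v = u + powerRZ tau e * (d - c) ->
  (forall x, c <= x <= d -> f x = u + powerRZ tau e * (x - c)) ->
  pl_homeo (fun x => g (f x)) c d u'' v''.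
Proof.
  induction 1 as [u v u'' v'' e' _ _ _ Hu'' -> Hg | u m v u'' m'' v'' H1 IH1 H2 IH2];
    intros f c d e Hcd Hc Hd Hv Hf; pose proof (powerRZ_tau_pos e).
  - apply pl_affine with (e' + e)%Z; auto.
    + rewrite Hv, powerRZ_tau_add. ring.
    + intros x Hx. rewrite Hf, Hg, powerRZ_tau_add by (auto; nra). ring.
  - destruct (pl_homeo_bounds _ _ _ _ _ H1) as (Hum & _ & Zu & Zm & _).
    destruct (pl_homeo_bounds _ _ _ _ _ H2) as (Hmv & _).
    pose proof (powerRZ_tau_opp_l e) as Hinv. pose proof (powerRZ_tau_pos (- e)).
    set (p := c + powerRZ tau (- e) * (m - u)).
    assert (Hm : m = u + powerRZ tau e * (p - c)).
    { unfold p. replace (powerRZ tau e * (c + powerRZ tau (- e) * (m - u) - c))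
        with (powerRZ tau (- e) * powerRZ tau e * (m - u)) by ring.
      rewrite Hinv. ring. }
    assert (c < p < d) by nra.
    assert (Zp : inZtau p).
    { apply inZtau_plus, inZtau_mult; auto using inZtau_powerRZ, inZtau_minus. }
    apply pl_glue with p m''.
    + apply IH1 with e; auto; [lra|]. intros x Hx. apply Hf. lra.
    + apply IH2 with e; auto; [lra| |].
      * rewrite Hv, Hm. ring.
      * intros x Hx. rewrite Hf, Hm by lra. ring.
Qed.

Lemma pl_homeo_comp f g c d c' d' c'' d'' :
  pl_homeo f c d c' d' -> pl_homeo g c' d' c'' d'' ->
  pl_homeo (fun x => g (f x)) c d c'' d''.
Proof.
  intros Hf. revert c'' d''.
  induction Hf as [c d c' d' e Hcd Hc Hd _ Hd' Hx | c m d c' m' d' H1 IH1 H2 IH2];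
    intros c'' d'' Hg.
  - exact (pl_homeo_comp_affine _ _ _ _ _ Hg _ _ _ e Hcd Hc Hd Hd' Hx).
  - destruct (pl_homeo_bounds _ _ _ _ _ H1) as (_ & Hcm' & _ & _ & Zc' & Zm').
    destruct (pl_homeo_bounds _ _ _ _ _ H2) as (_ & Hmd' & _ & _ & _ & Zd').
    pose proof (pl_homeo_restrict _ _ _ _ _ Hg c' m') as Hg1.
    pose proof (pl_homeo_restrict _ _ _ _ _ Hg m' d') as Hg2.
    rewrite (pl_homeo_start _ _ _ _ _ Hg) in Hg1.
    rewrite (pl_homeo_end _ _ _ _ _ Hg) in Hg2.
    apply pl_glue with m (g m'); [apply IH1, Hg1 | apply IH2, Hg2]; auto; lra.
Qed.

Definition tau_subdivision (f : R -> R) (c d : R) (k : nat) (p : nat -> R) (e : nat -> Z) :=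
  p 0%nat = c /\ p k = d /\
  (forall i, (i < k)%nat -> p i < p (S i)) /\
  (forall i, (i <= k)%nat -> inZtau (p i)) /\
  (forall i x, (i < k)%nat -> p i <= x <= p (S i) ->
     f x = f (p i) + powerRZ tau (e i) * (x - p i)).

Lemma pl_homeo_of_subdivision f c d k p e :
  (0 < k)%nat -> tau_subdivision f c d k p e -> inZtau (f c) ->
  pl_homeo f c d (f c) (f d).
Proof.
  intros Hk (Hp0 & Hpk & Hlt & HZ & Haff) Zfc.
  assert (Hpiece : forall i, (i < k)%nat -> inZtau (f (p i)) ->
            pl_homeo f (p i) (p (S i)) (f (p i)) (f (p (S i)))).
  { intros i Hi Zi. pose proof (Hlt i Hi).
    apply pl_affine with (e i);
      [lra | apply HZ; lia | apply HZ; lia | exact Zi | apply Haff; auto; lra |].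
    intros x Hx. apply Haff; auto. }
  assert (Hprefix : forall j, (0 < j <= k)%nat -> pl_homeo f c (p j) (f c) (f (p j))).
  { induction j as [|j IH]; intros Hj; [lia|].
    destruct (Nat.eq_dec j 0) as [->|Hj0].
    - rewrite <- Hp0. apply Hpiece; [lia | congruence].
    - assert (Hpj := IH ltac:(lia)).
      apply pl_glue with (p j) (f (p j)); auto.
      apply Hpiece; [lia | apply (pl_homeo_bounds _ _ _ _ _ Hpj)]. }
  rewrite <- Hpk. apply Hprefix. lia.
Qed.

Lemma tau_subdivision_concat f c m d k1 p1 e1 k2 p2 e2 :
  tau_subdivision f c m k1 p1 e1 -> tau_subdivision f m d k2 p2 e2 ->
  tau_subdivision f c d (k1 + k2)
    (fun i => if (i <=? k1)%nat then p1 i else p2 (i - k1)%nat)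
    (fun i => if (i <? k1)%nat then e1 i else e2 (i - k1)%nat).
Proof.
  intros (A1 & B1 & C1 & D1 & E1) (A2 & B2 & C2 & D2 & E2).
  set (p := fun i => if (i <=? k1)%nat then p1 i else p2 (i - k1)%nat).
  set (e := fun i => if (i <? k1)%nat then e1 i else e2 (i - k1)%nat).
  assert (P1 : forall i, (i <= k1)%nat -> p i = p1 i).
  { intros i Hi. unfold p. destruct (Nat.leb_spec i k1); [auto | lia]. }
  assert (P2 : forall i, (k1 <= i)%nat -> p i = p2 (i - k1)%nat).
  { intros i Hi. unfold p. destruct (Nat.leb_spec i k1); [|auto].
    replace i with k1 by lia. rewrite Nat.sub_diag. congruence. }
  assert (Q1 : forall i, (i < k1)%nat -> e i = e1 i).
  { intros i Hi. unfold e. destruct (Nat.ltb_spec i k1); [auto | lia]. }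
  assert (Q2 : forall i, (k1 <= i)%nat -> e i = e2 (i - k1)%nat).
  { intros i Hi. unfold e. destruct (Nat.ltb_spec i k1); [lia | auto]. }
  assert (Shift : forall i, (k1 <= i)%nat -> (S i - k1)%nat = S (i - k1)) by (intros; lia).
  repeat split.
  - rewrite P1 by lia. auto.
  - rewrite P2 by lia. replace (k1 + k2 - k1)%nat with k2 by lia. auto.
  - intros i Hi. destruct (Nat.lt_ge_cases i k1).
    + rewrite !P1 by lia. apply C1; lia.
    + rewrite !P2, Shift by lia. apply C2; lia.
  - intros i Hi. destruct (Nat.le_ge_cases i k1).
    + rewrite P1 by lia. apply D1; lia.
    + rewrite P2 by lia. apply D2; lia.
  - intros i x Hi Hx. destruct (Nat.lt_ge_cases i k1).
    + rewrite (P1 i), (P1 (S i)) in Hx by lia.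
      rewrite P1, Q1 by lia. apply E1; [lia | lra].
    + rewrite (P2 i), (P2 (S i)), Shift in Hx by lia.
      rewrite P2, Q2 by lia. apply E2; [lia | lra].
Qed.

Lemma subdivision_of_pl_homeo f c d c' d' : pl_homeo f c d c' d' ->
  exists k p e, tau_subdivision f c d k p e.
Proof.
  induction 1 as [c d c' d' e Hcd Hc Hd _ _ Hx | c m d c' m' d' _ IH1 _ IH2].
  - exists 1%nat, (fun i => if (i =? 0)%nat then c else d), (fun _ => e).
    repeat split; simpl; auto.
    + intros i Hi. replace i with 0%nat by lia. auto.
    + intros [|i] Hi; auto.
    + intros i x Hi Hx'. replace i with 0%nat in * by lia. simpl in *.
      rewrite !Hx by lra. ring.
  - destruct IH1 as (k1 & p1 & e1 & H1), IH2 as (k2 & p2 & e2 & H2).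
    eexists _, _, _. exact (tau_subdivision_concat _ _ _ _ _ _ _ _ _ _ H1 H2).
Qed.

Lemma isFtau_pl_homeo f : isFtau f -> pl_homeo f 0 1 0 1.
Proof.
  intros (_ & H0 & H1 & k & p & e & Hsub).
  destruct k as [|k].
  { destruct Hsub as (A & B & _). lra. }
  pose proof (pl_homeo_of_subdivision f 0 1 (S k) p e ltac:(lia) Hsub) as Hf.
  rewrite H0, H1 in Hf. apply Hf, (inZtau_IZR 0).
Qed.

Lemma isFtau_of_pl_homeo f : pl_homeo f 0 1 0 1 ->
  (forall x, x < 0 \/ 1 < x -> f x = x) -> isFtau f.
Proof.
  intros Hf Hout. destruct (subdivision_of_pl_homeo _ _ _ _ _ Hf) as (k & p & e & Hsub).
  repeat split; auto.
  - exact (pl_homeo_start _ _ _ _ _ Hf).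
  - exact (pl_homeo_end _ _ _ _ _ Hf).
  - exists k, p, e. exact Hsub.
Qed.

Definition stretchable (L L' : R) : Prop :=
  forall c c', inZtau c -> inZtau c' -> exists h, pl_homeo h c (c + L) c' (c' + L').

Lemma stretchable_bounds L L' : stretchable L L' ->
  0 < L /\ 0 < L' /\ inZtau L /\ inZtau L'.
Proof.
  intros H. destruct (H 0 0 (inZtau_IZR 0) (inZtau_IZR 0)) as [h Hh].
  rewrite !Rplus_0_l in Hh. destruct (pl_homeo_bounds _ _ _ _ _ Hh) as (? & ? & _ & ? & _ & ?).
  repeat split; auto; lra.
Qed.

Lemma stretchable_scale L e : 0 < L -> inZtau L -> stretchable L (powerRZ tau e * L).
Proof.
  intros HL ZL c c' Zc Zc'. exists (fun x => c' + powerRZ tau e * (x - c)).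
  apply pl_affine with e; auto; [lra | apply inZtau_plus; auto | ring].
Qed.

Lemma stretchable_trans L L' L'' :
  stretchable L L' -> stretchable L' L'' -> stretchable L L''.
Proof.
  intros H1 H2 c c' Zc Zc'.
  destruct (H1 c 0 Zc (inZtau_IZR 0)) as [h1 Hh1].
  destruct (H2 0 c' (inZtau_IZR 0) Zc') as [h2 Hh2].
  exists (fun x => h2 (h1 x)). exact (pl_homeo_comp _ _ _ _ _ _ _ _ Hh1 Hh2).
Qed.

Lemma stretchable_plus L1 L1' L2 L2' :
  stretchable L1 L1' -> stretchable L2 L2' -> stretchable (L1 + L2) (L1' + L2').
Proof.
  intros H1 H2 c c' Zc Zc'.
  destruct (stretchable_bounds _ _ H1) as (_ & _ & ZL1 & ZL1').
  destruct (H1 c c' Zc Zc') as [h1 Hh1].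
  destruct (H2 (c + L1) (c' + L1')) as [h2 Hh2]; try apply inZtau_plus; auto.
  rewrite <- !Rplus_assoc.
  eexists. exact (pl_homeo_glue_if _ _ _ _ _ _ _ _ Hh1 Hh2).
Qed.

Lemma stretchable_powerRZ_one e : stretchable (powerRZ tau e) 1.
Proof.
  rewrite <- (powerRZ_tau_opp_l e). apply stretchable_scale.
  - apply powerRZ_tau_pos.
  - apply inZtau_powerRZ.
Qed.

Lemma stretchable_one_powerRZ e : stretchable 1 (powerRZ tau e).
Proof.
  rewrite <- (Rmult_1_r (powerRZ tau e)). apply stretchable_scale; [lra | apply (inZtau_IZR 1)].
Qed.

Lemma stretchable_one_plus y z :
  stretchable 1 y -> stretchable 1 z -> stretchable 1 (y + z).
Proof.
  intros Hy Hz.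
  replace 1 with (powerRZ tau 1 + powerRZ tau 2) by (simpl; pose proof tau_sqr; lra).
  apply stretchable_plus; eapply stretchable_trans; eauto using stretchable_powerRZ_one.
Qed.

Lemma stretchable_one_unscale x e : stretchable 1 (powerRZ tau e * x) -> stretchable 1 x.
Proof.
  intros H. destruct (stretchable_bounds _ _ H) as (_ & Hpos & _ & Z).
  apply stretchable_trans with (1 := H).
  replace x with (powerRZ tau (- e) * (powerRZ tau e * x)) at 2
    by (rewrite <- Rmult_assoc, powerRZ_tau_opp_l; ring).
  apply stretchable_scale; auto.
Qed.

Lemma stretchable_one_nat_comb m n :
  (0 < m + n)%nat -> stretchable 1 (INR m + INR n * tau).
Proof.
  revert n. induction m as [|m IHm]; intros n Hmn.
  - induction n as [|n IHn]; [lia|].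
    destruct n as [|n].
    + replace (INR 0 + INR 1 * tau) with (powerRZ tau 1) by (simpl; ring).
      apply stretchable_one_powerRZ.
    + replace (INR 0 + INR (S (S n)) * tau) with ((INR 0 + INR (S n) * tau) + powerRZ tau 1)
        by (rewrite (S_INR (S n)); simpl; ring).
      apply stretchable_one_plus; [apply IHn; lia | apply stretchable_one_powerRZ].
  - rewrite S_INR.
    destruct (Nat.eq_dec (m + n) 0) as [Hmn0|Hmn0].
    + replace m with 0%nat by lia. replace n with 0%nat by lia.
      replace (INR 0 + 1 + INR 0 * tau) with (powerRZ tau 0) by (simpl; ring).
      apply stretchable_one_powerRZ.
    + replace (INR m + 1 + INR n * tau) with ((INR m + INR n * tau) + powerRZ tau 0)
        by (simpl; ring).
      apply stretchable_one_plus; [apply IHm; lia | apply stretchable_one_powerRZ].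
Qed.

Definition nat_comb_up_to_unit (x : R) : Prop :=
  exists e (m n : nat), powerRZ tau e * x = INR m + INR n * tau.

Lemma nat_comb_up_to_unit_scale x e :
  nat_comb_up_to_unit (powerRZ tau e * x) -> nat_comb_up_to_unit x.
Proof.
  intros (e' & m & n & H). exists (e' + e)%Z, m, n.
  rewrite powerRZ_tau_add, Rmult_assoc. exact H.
Qed.

Lemma nat_comb_up_to_unit_nonneg m n :
  (0 <= m)%Z -> (0 <= n)%Z -> nat_comb_up_to_unit (IZR m + IZR n * tau).
Proof.
  intros Hm Hn. exists 0%Z, (Z.to_nat m), (Z.to_nat n).
  rewrite !INR_IZR_INZ, !Z2Nat.id by auto. simpl. ring.
Qed.

Lemma powerRZ_tau_m2 : powerRZ tau (-2) = 2 + tau.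
Proof.
  change (-2)%Z with (-1 + -1)%Z. rewrite powerRZ_tau_add. simpl.
  rewrite Rmult_1_r, Rinv_tau. pose proof tau_sqr. nra.
Qed.

Lemma nat_comb_up_to_unit_neg_tau_coeff N m n :
  (n < 0)%Z -> (- n <= Z.of_nat N)%Z -> 0 < IZR m + IZR n * tau ->
  nat_comb_up_to_unit (IZR m + IZR n * tau).
Proof.
  revert m n. induction N as [|N IH]; intros m n Hn HN Hx; [lia|].
  pose proof tau_bounds. pose proof tau_sqr.
  assert (IZR n < 0) by (apply IZR_lt; lia).
  assert (Hm : (0 < m)%Z) by (apply lt_IZR; nra).
  assert (Hm2 : (0 < 2 * m + n)%Z) by (apply lt_IZR; rewrite plus_IZR, mult_IZR; nra).
  (* tau^-2 = 2 + tau maps m + n tau to (2m + n) + (m + n) tau, with m + n > n. *)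
  apply nat_comb_up_to_unit_scale with (-2)%Z.
  replace (powerRZ tau (-2) * (IZR m + IZR n * tau))
    with (IZR (2 * m + n) + IZR (m + n) * tau)
    by (rewrite powerRZ_tau_m2, !plus_IZR, mult_IZR; nra).
  destruct (Z_lt_le_dec (m + n) 0).
  - apply IH; try lia. rewrite !plus_IZR, mult_IZR. nra.
  - apply nat_comb_up_to_unit_nonneg; lia.
Qed.

Lemma nat_comb_up_to_unit_pos x : inZtau x -> 0 < x -> nat_comb_up_to_unit x.
Proof.
  intros (m & n & ->) Hx. pose proof tau_bounds. pose proof tau_sqr.
  destruct (Z_lt_le_dec n 0).
  - apply (nat_comb_up_to_unit_neg_tau_coeff (Z.to_nat (- n))); auto; lia.
  - destruct (Z_lt_le_dec m 0); [|apply nat_comb_up_to_unit_nonneg; auto].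
    assert (IZR m < 0) by (apply IZR_lt; lia).
    apply nat_comb_up_to_unit_scale with (-1)%Z.
    replace (powerRZ tau (-1) * (IZR m + IZR n * tau)) with (IZR (m + n) + IZR m * tau)
      by (simpl; rewrite Rmult_1_r, Rinv_tau, plus_IZR; nra).
    apply (nat_comb_up_to_unit_neg_tau_coeff (Z.to_nat (- m))); try lia.
    rewrite plus_IZR. nra.
Qed.

Lemma stretchable_one_pos x : inZtau x -> 0 < x -> stretchable 1 x.
Proof.
  intros Zx Hx. destruct (nat_comb_up_to_unit_pos x Zx Hx) as (e & m & n & He).
  apply stretchable_one_unscale with e. rewrite He.
  apply stretchable_one_nat_comb.
  destruct m, n; [|lia..].
  pose proof (powerRZ_tau_pos e). simpl in He. nra.
Qed.

Lemma pl_homeo_unit_onto a b : inZtau a -> inZtau b -> a < b ->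
  exists h, pl_homeo h 0 1 a b.
Proof.
  intros Za Zb Hab.
  destruct (stretchable_one_pos (b - a) (inZtau_minus _ _ Zb Za) ltac:(lra) 0 a
              (inZtau_IZR 0) Za) as [h Hh].
  exists h. replace 1 with (0 + 1) by ring. replace b with (a + (b - a)) by ring. exact Hh.
Qed.

Lemma pl_homeo_fixed_of_fixed_left f c d x0 : pl_homeo f c d c d -> c < x0 <= d ->
  (forall x, c <= x < x0 -> f x = x) -> f x0 = x0.
Proof.
  intros Hf Hx0 Hid. pose proof (pl_homeo_maps _ _ _ _ _ x0 Hf ltac:(lra)).
  destruct (Rtotal_order (f x0) x0) as [Hlt|[Heq|Hgt]]; auto; exfalso.
  - set (y := (f x0 + x0) / 2). assert (f x0 < y < x0) by (unfold y; lra).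
    assert (f y < f x0) by (apply (pl_homeo_lt _ _ _ _ _ Hf); lra).
    rewrite (Hid y) in * by lra. lra.
  - destruct (pl_homeo_inverse _ _ _ _ _ Hf) as (g & Hg & _ & Hfg).
    set (y := (x0 + f x0) / 2). assert (x0 < y < f x0) by (unfold y; lra).
    pose proof (pl_homeo_maps _ _ _ _ _ y Hg ltac:(lra)). pose proof (Hfg y ltac:(lra)) as Hfgy.
    destruct (Rlt_le_dec (g y) x0).
    + rewrite Hid in Hfgy by lra. lra.
    + pose proof (pl_homeo_le _ _ _ _ _ x0 (g y) Hf). lra.
Qed.

Lemma pl_homeo_fixed_of_fixed_right f c d x0 : pl_homeo f c d c d -> c <= x0 < d ->
  (forall x, x0 < x <= d -> f x = x) -> f x0 = x0.
Proof.
  intros Hf Hx0 Hid. pose proof (pl_homeo_maps _ _ _ _ _ x0 Hf ltac:(lra)).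
  destruct (Rtotal_order (f x0) x0) as [Hlt|[Heq|Hgt]]; auto; exfalso.
  - destruct (pl_homeo_inverse _ _ _ _ _ Hf) as (g & Hg & _ & Hfg).
    set (y := (f x0 + x0) / 2). assert (f x0 < y < x0) by (unfold y; lra).
    pose proof (pl_homeo_maps _ _ _ _ _ y Hg ltac:(lra)). pose proof (Hfg y ltac:(lra)) as Hfgy.
    destruct (Rle_lt_dec (g y) x0).
    + pose proof (pl_homeo_le _ _ _ _ _ (g y) x0 Hf). lra.
    + rewrite Hid in Hfgy by lra. lra.
  - set (y := (x0 + f x0) / 2). assert (x0 < y < f x0) by (unfold y; lra).
    assert (f x0 < f y) by (apply (pl_homeo_lt _ _ _ _ _ Hf); lra).
    rewrite (Hid y) in * by lra. lra.
Qed.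

Lemma isFtau_ab_pl_homeo a b k : 0 < a -> a < b -> b < 1 -> inZtau a -> inZtau b ->
  isFtau_ab a b k -> pl_homeo k a b a b /\ (forall x, x < a \/ b < x -> k x = x).
Proof.
  intros Ha Hab Hb Za Zb [Hk Hsupp].
  assert (Hout : forall x, x < a \/ b < x -> k x = x).
  { intros x Hx. destruct (Req_dec (k x) x) as [|Hne]; auto.
    apply Hsupp in Hne. lra. }
  pose proof (isFtau_pl_homeo k Hk) as Hk01.
  assert (Hka : k a = a).
  { apply (pl_homeo_fixed_of_fixed_left _ _ _ _ Hk01); [lra|]. intros; apply Hout; lra. }
  assert (Hkb : k b = b).
  { apply (pl_homeo_fixed_of_fixed_right _ _ _ _ Hk01); [lra|]. intros; apply Hout; lra. }
  split; auto.
  rewrite <- Hka at 2. rewrite <- Hkb at 2.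
  apply (pl_homeo_restrict _ _ _ _ _ Hk01); auto; lra.
Qed.

Lemma isFtau_ab_of_pl_homeo a b k : 0 < a -> b < 1 -> inZtau a -> inZtau b ->
  pl_homeo k a b a b -> (forall x, x < a \/ b < x -> k x = x) -> isFtau_ab a b k.
Proof.
  intros Ha Hb Za Zb Hk Hout.
  pose proof (pl_homeo_start _ _ _ _ _ Hk). pose proof (pl_homeo_end _ _ _ _ _ Hk).
  split.
  - apply isFtau_of_pl_homeo; [|intros x Hx; apply Hout; lra].
    apply pl_glue with b b; [apply pl_glue with a a; [|exact Hk]|].
    + apply (pl_homeo_ext _ _ _ _ _ (pl_homeo_id 0 a Ha (inZtau_IZR 0) Za)).
      intros x Hx. destruct (Req_dec x a) as [->|]; auto. symmetry. apply Hout. lra.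
    + apply (pl_homeo_ext _ _ _ _ _ (pl_homeo_id b 1 Hb Zb (inZtau_IZR 1))).
      intros x Hx. destruct (Req_dec x b) as [->|]; auto. symmetry. apply Hout. lra.
  - intros x Hx. destruct (Rlt_le_dec x a); [exfalso; apply Hx, Hout; lra|].
    destruct (Rle_lt_dec x b); [lra | exfalso; apply Hx, Hout; lra].
Qed.

Definition extend_by_translations (c d c' d' : R) (h : R -> R) (x : R) : R :=
  if Rlt_dec x c then x - c + c' else if Rle_dec x d then h x else x - d + d'.

Lemma extend_by_translations_cancel c d c' d' h g : c' <= d' ->
  (forall x, c <= x <= d -> c' <= h x <= d' /\ g (h x) = x) ->
  forall x, extend_by_translations c' d' c d g (extend_by_translations c d c' d' h x) = x.
Proof.
  intros Hcd' Hgh x. unfold extend_by_translations.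
  destruct (Rlt_dec x c); [destruct (Rlt_dec (x - c + c') c'); [ring | lra]|].
  destruct (Rle_dec x d).
  - destruct (Hgh x) as [Hhx Hx]; [lra|].
    destruct (Rlt_dec (h x) c'); [lra|]. destruct (Rle_dec (h x) d'); [auto | lra].
  - destruct (Rlt_dec (x - d + d') c'); [lra|].
    destruct (Rle_dec (x - d + d') d'); [lra | ring].
Qed.

Lemma pl_homeo_conj_extend h g f c d c' d' :
  pl_homeo h c d c' d' -> pl_homeo g c' d' c d ->
  (forall y, c' <= y <= d' -> h (g y) = y) ->
  pl_homeo f c d c d -> (forall x, x < c \/ d < x -> f x = x) ->
  let k y := extend_by_translations c d c' d' h (f (extend_by_translations c' d' c d g y)) in
  pl_homeo k c' d' c' d' /\ (forall y, y < c' \/ d' < y -> k y = y).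
Proof.
  intros Hh Hg Hhg Hf Hout k.
  destruct (pl_homeo_bounds _ _ _ _ _ Hh) as (Hcd & Hcd' & _).
  split.
  - apply (pl_homeo_ext _ _ _ _ _ (pl_homeo_comp _ _ _ _ _ _ _ _
             (pl_homeo_comp _ _ _ _ _ _ _ _ Hg Hf) Hh)).
    intros y Hy. pose proof (pl_homeo_maps _ _ _ _ _ y Hg Hy) as Hgy.
    pose proof (pl_homeo_maps _ _ _ _ _ (g y) Hf Hgy).
    unfold k, extend_by_translations.
    destruct (Rlt_dec y c'); [lra|]. destruct (Rle_dec y d'); [|lra].
    destruct (Rlt_dec (f (g y)) c); [lra|]. destruct (Rle_dec (f (g y)) d); [auto | lra].
  - assert (Hcancel := extend_by_translations_cancel c' d' c d g h ltac:(lra)).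
    intros y Hy. unfold k. rewrite Hout; [apply Hcancel|].
    + intros x Hx. split; [apply (pl_homeo_maps _ _ _ _ _ x Hg Hx) | auto].
    + unfold extend_by_translations.
      destruct (Rlt_dec y c'); [lra|]. destruct (Rle_dec y d'); lra.
Qed.

Lemma comp_group_iso_conj (G H : (R -> R) -> Prop) (u v : R -> R) :
  (forall x, v (u x) = x) -> (forall y, u (v y) = y) ->
  (forall f, G f -> H (fun y => u (f (v y)))) ->
  (forall k, H k -> G (fun x => v (k (u x)))) ->
  comp_group_iso G H (fun f y => u (f (v y))).
Proof.
  intros Hvu Huv HGH HHG. split; [|split; [|split]]; auto.
  - intros f1 f2 _ _ E. extensionality x.
    pose proof (f_equal (fun F => v (F (u x))) E) as Ex. simpl in Ex.
    rewrite !Hvu in Ex. exact Ex.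
  - intros k Hk. exists (fun x => v (k (u x))). split; auto.
    extensionality y. rewrite !Huv. reflexivity.
  - intros f1 f2 _ _. extensionality y. rewrite Hvu. reflexivity.
Qed.

Theorem mainTheorem13 (a b : R) :
  inZtau a -> inZtau b -> 0 < a -> a < b -> b < 1 ->
  exists phi : (R -> R) -> (R -> R), comp_group_iso isFtau (isFtau_ab a b) phi.
Proof.
  intros Za Zb Ha Hab Hb.
  destruct (pl_homeo_unit_onto a b Za Zb Hab) as [h Hh].
  destruct (pl_homeo_inverse _ _ _ _ _ Hh) as (g & Hg & Hgh & Hhg).
  exists (fun f y => extend_by_translations 0 1 a b h (f (extend_by_translations a b 0 1 g y))).
  apply comp_group_iso_conj.
  - apply extend_by_translations_cancel; [lra|].
    intros x Hx. split; [apply (pl_homeo_maps _ _ _ _ _ x Hh Hx) | auto].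
  - apply extend_by_translations_cancel; [lra|].
    intros y Hy. split; [apply (pl_homeo_maps _ _ _ _ _ y Hg Hy) | auto].
  - intros f Hf.
    destruct (pl_homeo_conj_extend h g f 0 1 a b Hh Hg Hhg (isFtau_pl_homeo f Hf) (proj1 Hf))
      as [Hk Hout].
    apply isFtau_ab_of_pl_homeo; auto.
  - intros k Hk.
    destruct (isFtau_ab_pl_homeo a b k Ha Hab Hb Za Zb Hk) as [Hk' Hout'].
    destruct (pl_homeo_conj_extend g h k a b 0 1 Hg Hh Hgh Hk' Hout') as [Hf Hout].
    apply isFtau_of_pl_homeo; auto.
Qed.
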